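(* Let $\phi\in C^4(\mathbb{R})$ be a profile function of a graph-like forward self-similar solution to the planar surface diffusion flow, i.e. $$\frac{\phi(x_1) - x_1\phi'(x_1)}{4\,v(x_1)} = -\frac{1}{v}\frac{d}{dx_1}\Big(\frac{1}{v}\frac{dk}{dx_1}\Big)\quad\text{on }\mathbb{R},\qquad v=\sqrt{1+(\phi')^2},\ k=\phi''/v^3.$$ Assume $\phi$ is globally Lipschitz and $\phi' - a_0\in L^1(\mathbb{R})$ for some $a_0\in\mathbb{R}$. Then $\phi(x_1) = a_0 x_1$ for all $x_1\in\mathbb{R}$.
   Context: The displayed equation is the profile equation $\frac{x\cdot\mathbf{n}}{4}=-\partial_s^2 k$ for the graph $\Gamma_*=\{(x_1,\phi(x_1))\}$ with upward normal $\mathbf{n}=(-\phi',1)/v$, curvature $k$ and arc-length derivative $\partial_s=v^{-1}\partial_{x_1}$, so that $t^{1/4}\Gamma_*$ solves the surface diffusion flow $V=-\partial_s^2 k$. *)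

From HB Require Import structures.
From mathcomp Require Import all_boot all_order all_algebra.
From mathcomp Require Import all_classical all_reals all_analysis.
Set Implicit Arguments. Unset Strict Implicit. Unset Printing Implicit Defensive.
Import Order.TTheory GRing.Theory Num.Theory.
Import numFieldNormedType.Exports.
Local Open Scope ring_scope.
Local Open Scope classical_set_scope.

Definition C4 {R : realType} (f : R -> R) : Prop :=
  (forall k : nat, (k < 4)%N -> forall x : R, derivable (derive1n k f) x 1) /\
  continuous (derive1n 4 f).

Definition vfun {R : realType} (phi : R -> R) (x : R) : R :=
  Num.sqrt (1 + (derive1 phi x) ^+ 2).

Definition kfun {R : realType} (phi : R -> R) (x : R) : R :=
  (derive1n 2 phi x) / (vfun phi x) ^+ 3.

Definition sdf_profile {R : realType} (phi : R -> R) : Prop :=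
  forall x : R,
    (phi x - x * derive1 phi x) / (4 * vfun phi x)
    = - (1 / vfun phi x) *
        derive1 (fun y => (1 / vfun phi y) * derive1 (kfun phi) y) x.

Definition globally_lipschitz {R : realType} (f : R -> R) : Prop :=
  exists L : R, forall x y : R, `|f x - f y| <= L * `|x - y|.

From HB Require Import structures.
From mathcomp Require Import all_boot all_order all_algebra.
From mathcomp Require Import all_classical all_reals all_analysis.
From mathcomp Require Import ring lra.
Import Order.TTheory GRing.Theory Num.Theory.
Import numFieldNormedType.Exports.
Local Open Scope ring_scope.
Local Open Scope classical_set_scope.

(* The profile equation makes [Pmon] nondecreasing, with derivative
   [angle_defect a0 phi' + 4 v ks^2], and the angle defect vanishes only where
   [phi' = a0]. If [phi'] is not constantly [a0], [Pmon] is thus bounded away from 0,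
   with a sign, near [+oo] or near [-oo]. There the identity for [(k^2)'] makes [k^2]
   grow linearly, the errors being controlled by the integrable [|phi' - a0|] and by
   [phi - a0 x], bounded for the same reason; but [|k| <= |phi''|] and [phi'] is
   bounded, so [k^2 < 1] somewhere on every long interval. If instead
   [phi' = a0] everywhere, the curvature vanishes and the profile equation reads
   [phi = a0 x]. *)

Section real_derivatives.
Context {R : realType}.
Implicit Types (f F df dF : R -> R) (a b c C L x : R).

Lemma is_derive1_ndecr {f} df {a b} : (forall x, is_derive x 1 f (df x)) ->
  (forall x, a <= x <= b -> 0 <= df x) -> a <= b -> f a <= f b.
Proof.
move=> fdf df_ge0 ab; rewrite -subr_ge0.
have fd x : derivable f x 1 by case: (fdf x).
have [z /[!in_itv]/= zab ->] := MVT_segment ab (fun x _ => fdf x)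
  (derivable_within_continuous (fun x _ => fd x)).
by rewrite mulr_ge0 ?df_ge0 ?subr_ge0.
Qed.

Lemma ler_increment_derive {f F} df dF {a b} c C :
  (forall x, is_derive x 1 f (df x)) -> (forall x, is_derive x 1 F (dF x)) ->
  (forall x, a <= x <= b -> c - C * dF x <= df x) -> a <= b ->
  c * (b - a) - C * (F b - F a) <= f b - f a.
Proof.
move=> fdf FdF hdf ab.
suff : f a - c * a + C * F a <= f b - c * b + C * F b by lra.
apply: (is_derive1_ndecr (f := fun x => f x - c * x + C * F x)
  (fun x => df x - c + C * dF x)) => // [x|x /hdf]; last by lra.
by apply: is_derive_eq; rewrite -[c%:A]/(c * 1) mulr1.
Qed.

Lemma ler_dist_increment {f F} df dF {a b} :
  (forall x, is_derive x 1 f (df x)) -> (forall x, is_derive x 1 F (dF x)) ->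
  (forall x, a <= x <= b -> `|df x| <= dF x) -> a <= b ->
  `|f b - f a| <= F b - F a.
Proof.
move=> fdf FdF hdf ab.
have up : F a - f a <= F b - f b.
  apply: (is_derive1_ndecr (f := fun x => F x - f x) (fun x => dF x - df x)) => // x /hdf.
  by rewrite subr_ge0; apply: le_trans; rewrite ler_norm.
have low : F a + f a <= F b + f b.
  apply: (is_derive1_ndecr (f := fun x => F x + f x) (fun x => dF x + df x)) => // x /hdf.
  by rewrite -lerBlDr sub0r; apply: le_trans; rewrite -normrN ler_norm.
by rewrite ler_norml; apply/andP; split; lra.
Qed.

Lemma lipschitz_norm_derive1_le f L x : derivable f x 1 ->
  (forall y, `|f y - f x| <= L * `|y - x|) -> `|f^`() x| <= L.
Proof.
move=> fx fL; rewrite derive1E /derive -lim_norm //.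
apply: limr_le; first exact: is_cvg_norm.
near=> h.
have h0 : h != 0 by near: h; exact: nbhs_dnbhs_neq.
rewrite /= normrZ normfV ler_pdivrMl ?normr_gt0 // -[h%:A]/(h * 1) mulr1 mulrC.
by have := fL (h + x); rewrite addrK.
Unshelve. all: by end_near. Qed.

Lemma exists_small_derive1 {f L a b} : (forall x, derivable f x 1) ->
  (forall x, `|f x| <= L) -> a < b ->
  exists2 c, c \in `]a, b[%R & `|f^`() c| * (b - a) <= L *+ 2.
Proof.
move=> fd fL ab.
have [c cab fbfa] := MVT ab (fun x _ => derivableP (fd x))
  (derivable_within_continuous (fun x _ => fd x)).
exists c => //.
rewrite derive1E -(gtr0_norm (_ : 0 < b - a)) ?subr_gt0 // -normrM -fbfa.
by rewrite mulr2n (le_trans (ler_normB _ _)) ?lerD.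
Qed.

End real_derivatives.

Section arclen.
Context {R : realType}.
Implicit Types (a q x : R) (f : R -> R).

Definition arclen q := Num.sqrt (1 + q ^+ 2).

Lemma arclen_sqr q : arclen q ^+ 2 = 1 + q ^+ 2.
Proof. by rewrite sqr_sqrtr // addr_ge0 ?sqr_ge0. Qed.

Lemma arclen_ge1 q : 1 <= arclen q.
Proof. by rewrite -sqrtr1 ler_sqrt ?lerDl ?sqr_ge0 // addr_ge0 ?sqr_ge0. Qed.

Lemma arclen_gt0 q : 0 < arclen q.
Proof. exact: lt_le_trans ltr01 (arclen_ge1 q). Qed.

Lemma arclen_neq0 q : arclen q != 0.
Proof. by rewrite gt_eqF ?arclen_gt0. Qed.

(* Cauchy-Schwarz for the vectors (1, q) and (1, a). *)
Lemma arclen_CauchySchwarz q a : 1 + a * q <= arclen q * arclen a.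
Proof.
rewrite /arclen -sqrtrM ?addr_ge0 ?sqr_ge0 // (le_trans (ler_norm _)) //.
rewrite -sqrtr_sqr ler_sqrt ?mulr_ge0 ?addr_ge0 ?sqr_ge0 //.
have := sqr_ge0 (q - a); nra.
Qed.

Lemma arclen_CauchySchwarz_eq q a : 1 + a * q = arclen q * arclen a -> q = a.
Proof.
move=> e; have : (q - a) ^+ 2 = 0.
  have := arclen_sqr q; have := arclen_sqr a.
  have : (1 + a * q) ^+ 2 = (arclen q * arclen a) ^+ 2 by rewrite e.
  rewrite exprMn; nra.
by move/eqP; rewrite sqrf_eq0 subr_eq0 => /eqP.
Qed.

Lemma arclen_lipschitz q a : `|arclen q - arclen a| <= `|q - a|.
Proof.
have := arclen_CauchySchwarz q a; have := arclen_sqr q; have := arclen_sqr a.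
have := arclen_ge1 q; have := arclen_ge1 a.
move=> *; have sqr_le : (arclen q - arclen a) ^+ 2 <= (q - a) ^+ 2 by nra.
by rewrite -ler_sqr ?nnegrE // !real_normK ?num_real.
Qed.

Lemma is_derive_arclen f x (df : R) : is_derive x 1 f df ->
  is_derive x 1 (fun y => arclen (f y)) (f x * df / arclen (f x)).
Proof.
move=> fdf; have pos : 0 < 1 + f x ^+ 2 by rewrite ltr_pwDl ?sqr_ge0.
apply: is_derive_eq; first exact: (@is_derive1_comp _ Num.sqrt
  (fun y => 1 + f y ^+ 2) x _ _ (is_derive1_sqrt pos)).
rewrite /GRing.scale /= -/(arclen (f x)).
by have fx_neq0 := arclen_neq0 (f x); field.
Qed.

End arclen.

Section angle_defect.
Context {R : realType}.
Implicit Types (a q : R).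

(* [arclen q * (1 - cos t)], where [t] is the angle between [(1, q)] and [(1, a)]. *)
Definition angle_defect a q := arclen q - (1 + a * q) / arclen a.

Lemma angle_defect_ge0 a q : 0 <= angle_defect a q.
Proof. by rewrite subr_ge0 ler_pdivrMr ?arclen_gt0 ?arclen_CauchySchwarz. Qed.

Lemma angle_defect_eq0 a q : angle_defect a q = 0 -> q = a.
Proof.
move/eqP; rewrite subr_eq0 => /eqP e; apply: arclen_CauchySchwarz_eq.
by rewrite e divfK ?arclen_neq0.
Qed.

Lemma norm_sub_scaled_arclen_le a q :
  `|q - a * arclen q / arclen a| <= (1 + `|a|) * `|q - a|.
Proof.
have -> : q - a * arclen q / arclen a = q - a + a * ((arclen a - arclen q) / arclen a).
  by have a_neq0 := arclen_neq0 a; field.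
rewrite [X in _ <= X]mulrDl mul1r (le_trans (ler_normD _ _)) // lerD2l normrM ler_wpM2l //.
rewrite normrM normfV (gtr0_norm (arclen_gt0 a)) ler_pdivrMr ?arclen_gt0 //.
rewrite distrC (le_trans (arclen_lipschitz q a)) // ler_peMr //.
exact: arclen_ge1.
Qed.

End angle_defect.

Section profile_curvature.
Context {R : realType} (phi : R -> R).
Implicit Types x : R.
Hypothesis phiC4 : C4 phi.

Local Notation p := (derive1 phi).
Local Notation p2 := (derive1 p).
Local Notation p3 := (derive1 p2).
Local Notation v := (vfun phi).
Local Notation k := (kfun phi).

#[local] Instance is_derive_phi x : is_derive x 1 phi (p x).
Proof. rewrite derive1E; exact: derivableP (phiC4.1 0%N isT x). Qed.

#[local] Instance is_derive_p x : is_derive x 1 p (p2 x).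
Proof. rewrite derive1E; exact: derivableP (phiC4.1 1%N isT x). Qed.

#[local] Instance is_derive_p2 x : is_derive x 1 p2 (p3 x).
Proof. rewrite derive1E; exact: derivableP (phiC4.1 2%N isT x). Qed.

#[local] Instance is_derive_p3 x : is_derive x 1 p3 (derive1 p3 x).
Proof. rewrite derive1E; exact: derivableP (phiC4.1 3%N isT x). Qed.

Lemma vfunE x : v x = arclen (p x). Proof. by []. Qed.

Lemma kfunE x : k x = p2 x / v x ^+ 3. Proof. by []. Qed.

Lemma vfun_sqr x : v x ^+ 2 = 1 + p x ^+ 2. Proof. exact: arclen_sqr. Qed.

Lemma vfun_ge1 x : 1 <= v x. Proof. exact: arclen_ge1. Qed.

Lemma vfun_gt0 x : 0 < v x. Proof. exact: arclen_gt0. Qed.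

Lemma vfun_neq0 x : v x != 0. Proof. exact: arclen_neq0. Qed.

#[local] Instance is_derive_vfun x : is_derive x 1 v (p x * p2 x / v x).
Proof. exact: is_derive_arclen. Qed.

#[local] Instance is_derive_vinv x :
  is_derive x 1 (fun y => (v y)^-1) (- p x * p2 x / v x ^+ 3).
Proof.
apply: is_derive_eq; first exact: is_deriveV (vfun_neq0 x) _.
by rewrite /GRing.scale /=; have vx := vfun_neq0 x; field.
Qed.

(* Powers of [(v x)^-1] rather than divisions, so that [is_derive] instances apply. *)
Definition dkfun x := p3 x * (v x)^-1 ^+ 3 - 3 * p x * p2 x ^+ 2 * (v x)^-1 ^+ 5.

Lemma is_derive_kfun x : is_derive x 1 k (dkfun x).
Proof.
have -> : k = fun y => p2 y * (v y)^-1 ^+ 3 by apply/funext => y; rewrite kfunE exprVn.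
apply: is_derive_eq.
by rewrite /GRing.scale /= /dkfun; have vx := vfun_neq0 x; field.
Qed.

Definition ks x := 1 / v x * derive1 k x.

Lemma derive1_kfun : derive1 k = dkfun.
Proof. by apply/funext => x; rewrite derive1E; case: (is_derive_kfun x). Qed.

Lemma derivable_ks x : derivable ks x 1.
Proof. rewrite /ks derive1_kfun /dkfun; apply: ex_derive. Qed.

Lemma derive1_kfunE x : derive1 k x = v x * ks x.
Proof. by rewrite /ks; have vx := vfun_neq0 x; field. Qed.

Hypothesis phi_sdf : sdf_profile phi.

Lemma is_derive_ks x : is_derive x 1 ks (- (phi x - x * p x) / 4).
Proof.
apply: is_derive_eq (derivableP (derivable_ks x)) _; rewrite -derive1E.
have vx := vfun_neq0 x; have sdf_x := phi_sdf x; rewrite -/ks in sdf_x.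
have vx' : - (1 / v x) != 0 by rewrite oppr_eq0 div1r invr_eq0.
by rewrite -[LHS](mulKf vx') -sdf_x; field.
Qed.

#[local] Existing Instances is_derive_kfun is_derive_ks.

Variable a0 : R.

(* The profile equation cancels all of [Pmon'] but [angle_defect a0 p + 4 v ks^2]. *)
Definition Pmon x := (x + phi x * p x) / v x - x / arclen a0
  - a0 / arclen a0 * phi x + 4 * (k x * ks x).

Lemma is_derive_Pmon x :
  is_derive x 1 Pmon (angle_defect a0 (p x) + 4 * ks x ^+ 2 * v x).
Proof.
apply: is_derive_eq; rewrite /GRing.scale /= -derive1_kfun derive1_kfunE.
rewrite /angle_defect -vfunE kfunE; have vx := vfun_neq0 x.
have a0n0 := arclen_neq0 a0.
apply/subr0_eq; transitivity ((v x ^+ 2 - (1 + p x ^+ 2)) *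
  ((phi x * p2 x - v x ^+ 2) / v x ^+ 3)); first by field; rewrite vx a0n0.
by rewrite vfun_sqr subrr mul0r.
Qed.

Lemma Pmon_ndecr {a b} : a <= b -> Pmon a <= Pmon b.
Proof.
apply: (is_derive1_ndecr
  (fun x => angle_defect a0 (p x) + 4 * ks x ^+ 2 * v x) is_derive_Pmon) => x _.
have v_ge0 := ltW (vfun_gt0 x).
by rewrite addr_ge0 ?angle_defect_ge0 // mulr_ge0 // mulr_ge0 // sqr_ge0.
Qed.

Lemma Pmon_lt x0 : 0 < angle_defect a0 (p x0) -> Pmon (x0 - 1) < Pmon (x0 + 1).
Proof.
move=> e_gt0; rewrite ltNge; apply/negP => P_le.
have x0_ge : x0 - 1 <= x0 by rewrite gerBl.
have x0_le : x0 <= x0 + 1 by rewrite lerDl.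
have x0_in : x0 \in `](x0 - 1), (x0 + 1)[%R by rewrite in_itv /= gtrBl ltrDl ltr01.
have P_max t : t \in `](x0 - 1), (x0 + 1)[%R -> Pmon t <= Pmon x0.
  rewrite in_itv /= => /andP[/ltW t_ge /ltW t_le].
  exact: le_trans (Pmon_ndecr t_le) (le_trans P_le (Pmon_ndecr x0_ge)).
have P_der t : derivable Pmon t 1 by case: (is_derive_Pmon t).
have [_ D0] := derive1_at_max (le_trans x0_ge x0_le) (fun t _ => P_der t) x0_in P_max.
have [_ D1] := is_derive_Pmon x0.
have : angle_defect a0 (p x0) <= angle_defect a0 (p x0) + 4 * ks x0 ^+ 2 * v x0.
  by rewrite lerDl mulr_ge0 ?(ltW (vfun_gt0 x0)) // mulr_ge0 ?sqr_ge0.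
by move/(lt_le_trans e_gt0); rewrite -D1 D0 ltxx.
Qed.

Lemma sdf_profile_const_slope : (forall x, p x = a0) -> forall x, phi x = a0 * x.
Proof.
move=> p_a0 x.
have p_cst : p = cst a0 by apply/funext.
have k_cst : k = cst 0.
  by apply/funext => y; rewrite kfunE p_cst derive1_cst mul0r.
have ks_cst : ks = cst 0.
  by apply/funext => y; rewrite /ks k_cst derive1_cst mulr0.
have := phi_sdf x; rewrite -/ks ks_cst derive1_cst mulr0 p_a0.
move/(congr1 (fun t => t * (4 * v x))); rewrite mul0r divfK ?mulf_neq0 ?vfun_neq0 //.
by move/eqP; rewrite subr_eq0 mulrC => /eqP.
Qed.

(* The middle term has the sign of [x]; the last one is [O(|phi' - a0|)] once
   [phi - a0 x] is bounded. *)
Lemma is_derive_kfun_sqr x : is_derive x 1 (fun y => k y ^+ 2)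
  (v x * Pmon x / 2 + x * arclen a0 * angle_defect a0 (p x) / 2
   - (phi x - a0 * x) * (p x - a0 * v x / arclen a0) / 2).
Proof.
apply: is_derive_eq; rewrite /GRing.scale /= -derive1_kfun derive1_kfunE.
rewrite /Pmon /angle_defect -vfunE; have vx := vfun_neq0 x.
have a0n0 := arclen_neq0 a0.
apply/subr0_eq; transitivity ((arclen a0 ^+ 2 - (1 + a0 ^+ 2)) *
  (- (x * v x) / (2 * arclen a0))); first by field; rewrite vx a0n0.
by rewrite arclen_sqr subrr mul0r.
Qed.

End profile_curvature.

Section primitive.
Context {R : realType}.
Local Notation mu := (@lebesgue_measure R).
Variable g : R -> R.
Hypothesis g_int : mu.-integrable setT (EFin \o g).

Definition primitive x := (\int[mu]_(t in `]-oo, x]) g t)%R.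

Lemma is_derive_primitive x : {for x, continuous g} -> is_derive x 1 primitive (g x).
Proof.
move=> gx; have x_lt : x < x + 1 by rewrite ltrDl.
have g_int' : mu.-integrable `]-oo, x + 1] (EFin \o g).
  by apply: integrableS g_int => //; exact: measurable_itv.
have [dF dFE] := continuous_FTC1 x_lt g_int' (ltNyr _) gx.
by have := derivableP dF; rewrite -derive1E dFE.
Qed.

Hypothesis g_ge0 : forall x, 0 <= g x.

Lemma primitive_ge0 x : 0 <= primitive x.
Proof. by apply: Rintegral_ge0 => t _; exact: g_ge0. Qed.

Lemma primitive_le_integral x : primitive x <= (\int[mu]_t g t)%R.
Proof.
have itv_int : mu.-integrable `]-oo, x] (EFin \o g).
  by apply: integrableS g_int => //; exact: measurable_itv.
rewrite /primitive /Rintegral; apply: fine_le; [exact: integrable_fin_num itv_int|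
  exact: integrable_fin_num g_int|].
apply: ge0_subset_integral => //; first exact: measurable_int g_int.
by move=> t _; rewrite lee_fin g_ge0.
Qed.

End primitive.

Section growth.
Context {R : realType} (phi : R -> R) (a0 : R).
Hypothesis phiC4 : C4 phi.
Hypothesis phi_lip : globally_lipschitz phi.
Hypothesis phi_int :
  (@lebesgue_measure R).-integrable setT (fun x => (derive1 phi x - a0)%:E).
Implicit Types x y : R.

Local Notation p := (derive1 phi).
Local Notation v := (vfun phi).
Local Notation k := (kfun phi).
Local Notation P := (Pmon phi a0).
Local Notation F := (primitive (fun t => `|p t - a0|)).
Local Notation psi := (fun x => phi x - a0 * x).

#[local] Instance is_derive_phi_C4 x : is_derive x 1 phi (p x) := is_derive_phi phi phiC4 x.
#[local] Instance is_derive_p_C4 x : is_derive x 1 p (derive1 p x) := is_derive_p phi phiC4 x.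

Lemma derive1_bounded : exists L, forall x, `|p x| <= L.
Proof.
have [L phiL] := phi_lip; exists L => x.
by apply: lipschitz_norm_derive1_le => [|y]; [exact: ex_derive | exact: phiL].
Qed.

Lemma integrable_norm_slope :
  (@lebesgue_measure R).-integrable setT (EFin \o (fun t => `|p t - a0|)).
Proof. exact: integrable_norm phi_int. Qed.

Lemma is_derive_F x : is_derive x 1 F `|p x - a0|.
Proof.
apply: (@is_derive_primitive _ _ integrable_norm_slope x).
apply: (@continuous_comp _ _ _ (fun t => p t - a0) Num.norm); last exact: norm_continuous.
apply: cvgB; last exact: cvg_cst.
exact/differentiable_continuous/derivable1_diffP/ex_derive.
Qed.

Lemma F_bounded : exists I, forall x, 0 <= F x <= I.
Proof.
exists (\int[@lebesgue_measure R]_t `|p t - a0|)%R => x.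
by rewrite primitive_ge0 ?primitive_le_integral //; exact: integrable_norm_slope.
Qed.

Lemma is_derive_psi x : is_derive x 1 psi (p x - a0).
Proof. by apply: is_derive_eq; rewrite /GRing.scale /= mulr1. Qed.

Lemma psi_bounded : exists M, forall x, `|psi x| <= M.
Proof.
have [I FI] := F_bounded; exists (`|psi 0| + I) => x.
have psi_incr a b : a <= b -> `|psi b - psi a| <= I.
  move=> ab; have /andP[Fa_ge0 _] := FI a; have /andP[_ Fb_le] := FI b.
  have := ler_dist_increment _ _ is_derive_psi is_derive_F (fun y _ => lexx _) ab.
  lra.
rewrite -[psi x](subrK (psi 0)) (le_trans (ler_normD _ _)) // addrC lerD2l.
have [/psi_incr //|/ltW /psi_incr] := leP 0 x; by rewrite distrC.
Qed.

Lemma norm_kfun_le x : `|k x| <= `|derive1 p x|.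
Proof.
rewrite kfunE normrM normfV (ger0_norm (exprn_ge0 3 (ltW (vfun_gt0 phi x)))).
by rewrite ler_pdivrMr ?exprn_gt0 ?vfun_gt0 // ler_peMr // exprn_ege1 ?vfun_ge1.
Qed.

(* Mean value theorem on [p], using [|k| <= |p'|]. *)
Lemma kfun_sqr_lt1_somewhere {L} : (forall x, `|p x| <= L) ->
  forall Y, exists2 y, Y <= y <= Y + (2 * L + 1) & k y ^+ 2 < 1.
Proof.
move=> pL Y; have L_ge0 : 0 <= L := le_trans (normr_ge0 _) (pL 0).
have Y_lt : Y < Y + (2 * L + 1) by rewrite ltrDl; lra.
have p_der x : derivable p x 1 by exact: ex_derive.
have [y] := exists_small_derive1 p_der pL Y_lt.
rewrite in_itv /= addrAC subrr add0r => /andP[Yy yY] p2y.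
exists y; first by rewrite !ltW.
have p2_lt1 : `|derive1 p y| < 1 by rewrite mulr2n in p2y; nra.
rewrite -real_normK ?num_real // expr_lt1 //.
exact: le_lt_trans (norm_kfun_le y) p2_lt1.
Qed.

Lemma kfun_sqr_not_eventually_ge1 Y : ~ (forall y, Y <= y -> 1 <= k y ^+ 2).
Proof.
move=> k_ge1; have [L pL] := derive1_bounded.
have [y /andP[Yy _]] := kfun_sqr_lt1_somewhere pL Y.
by rewrite ltNge k_ge1.
Qed.

Lemma kfun_sqr_not_eventually_ge1_left Y : ~ (forall y, y <= Y -> 1 <= k y ^+ 2).
Proof.
move=> k_ge1; have [L pL] := derive1_bounded.
have [y /andP[_ yY]] := kfun_sqr_lt1_somewhere pL (Y - (2 * L + 1)).
by rewrite subrK in yY; rewrite ltNge k_ge1.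
Qed.

Local Notation ksqr := (fun y => k y ^+ 2).

Lemma is_derive_ksqr x : is_derive x 1 ksqr (derive1 ksqr x).
Proof. by rewrite derive1E; apply: derivableP; case: (is_derive_kfun_sqr phi phiC4 a0 x). Qed.

Lemma derive1_ksqr_near M x : (forall y, `|psi y| <= M) ->
  `|derive1 ksqr x - (v x * P x + x * arclen a0 * angle_defect a0 (p x)) / 2|
  <= M * (1 + `|a0|) / 2 * `|p x - a0|.
Proof.
move=> psiM; rewrite derive1E; case: (is_derive_kfun_sqr phi phiC4 a0 x) => _ ->.
have psiQ : `|psi x * (p x - a0 * v x / arclen a0)| <= M * ((1 + `|a0|) * `|p x - a0|).
  by rewrite normrM ler_pM // norm_sub_scaled_arclen_le.
move: psiQ; rewrite !ler_norml => /andP[? ?]; apply/andP; split; lra.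
Qed.

(* On [[max b 0, +oo)], [(k^2)' >= c/2 - C |p - a0|] and [|p - a0|] is integrable:
   [k^2] grows linearly. *)
Lemma Pmon_not_eventually_pos c b : 0 < c -> ~ (forall x, b <= x -> c <= P x).
Proof.
move=> c_gt0 Pc; have [M psiM] := psi_bounded; have [I FI] := F_bounded.
pose C := M * (1 + `|a0|) / 2; pose b' := Num.max b 0.
have C_ge0 : 0 <= C by rewrite !mulr_ge0 ?addr_ge0 // (le_trans _ (psiM 0)).
have [b_le b'_ge0] : b <= b' /\ 0 <= b' by split; rewrite le_max lexx ?orbT.
have dk_ge x : b' <= x -> c / 2 - C * `|p x - a0| <= derive1 ksqr x.
  move=> b'x; have vP : c <= v x * P x.
    by have := Pc x (le_trans b_le b'x); have := vfun_ge1 phi x; nra.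
  have xe : 0 <= x * arclen a0 * angle_defect a0 (p x).
    by rewrite !mulr_ge0 ?angle_defect_ge0 ?(ltW (arclen_gt0 a0)) ?(le_trans b'_ge0 b'x).
  by have := derive1_ksqr_near _ x psiM; rewrite -/C ler_norml => /andP[+ _]; lra.
have T_ge0 : 0 <= 2 / c * (C * I + 1).
  have I_ge0 : 0 <= I by have /andP[] := FI 0; exact: le_trans.
  exact: mulr_ge0 (divr_ge0 (ler0n _ 2) (ltW c_gt0)) (addr_ge0 (mulr_ge0 C_ge0 I_ge0) ler01).
apply: (kfun_sqr_not_eventually_ge1 (b' + 2 / c * (C * I + 1))) => y yT.
have CI_le : C * I + 1 <= c / 2 * (y - b').
  by rewrite -ler_pdivrMl ?divr_gt0 // invf_div lerBrDl.
have b'y : b' <= y by apply: le_trans yT; rewrite lerDl T_ge0.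
have : c / 2 * (y - b') - C * (F y - F b') <= k y ^+ 2 - k b' ^+ 2.
  apply: (ler_increment_derive _ _ _ _ is_derive_ksqr is_derive_F _ b'y).
  by move=> x /andP[b'x _]; exact: dk_ge.
have /andP[_ FyI] := FI y; have /andP[Fb'_ge0 _] := FI b'.
have : C * (F y - F b') <= C * I by rewrite ler_wpM2l //; lra.
by have := sqr_ge0 (k b'); lra.
Qed.

Lemma Pmon_not_eventually_neg c a : 0 < c -> ~ (forall x, x <= a -> P x <= - c).
Proof.
move=> c_gt0 Pc; have [M psiM] := psi_bounded; have [I FI] := F_bounded.
pose C := M * (1 + `|a0|) / 2; pose a' := Num.min a 0.
have C_ge0 : 0 <= C by rewrite !mulr_ge0 ?addr_ge0 // (le_trans _ (psiM 0)).
have [a'_le a'_le0] : a' <= a /\ a' <= 0 by split; rewrite ge_min lexx ?orbT.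
have dk_le x : x <= a' -> c / 2 - C * `|p x - a0| <= - derive1 ksqr x.
  move=> xa'; have vP : v x * P x <= - c.
    by have := Pc x (le_trans xa' a'_le); have := vfun_ge1 phi x; nra.
  have xe : x * arclen a0 * angle_defect a0 (p x) <= 0.
    rewrite mulr_le0_ge0 ?angle_defect_ge0 // mulr_le0_ge0 ?(ltW (arclen_gt0 a0)) //.
    exact: le_trans xa' a'_le0.
  by have := derive1_ksqr_near _ x psiM; rewrite -/C ler_norml => /andP[_]; lra.
have T_ge0 : 0 <= 2 / c * (C * I + 1).
  have I_ge0 : 0 <= I by have /andP[] := FI 0; exact: le_trans.
  exact: mulr_ge0 (divr_ge0 (ler0n _ 2) (ltW c_gt0)) (addr_ge0 (mulr_ge0 C_ge0 I_ge0) ler01).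
apply: (kfun_sqr_not_eventually_ge1_left (a' - 2 / c * (C * I + 1))) => y yT.
have CI_le : C * I + 1 <= c / 2 * (a' - y).
  by rewrite -ler_pdivrMl ?divr_gt0 // invf_div lerBrDr addrC -lerBrDr.
have ya' : y <= a' by apply: le_trans yT _; rewrite gerBl T_ge0.
have : c / 2 * (a' - y) - C * (F a' - F y) <= - k a' ^+ 2 - - k y ^+ 2.
  apply: (ler_increment_derive (f := fun x => - k x ^+ 2) _ _ _ _
    (fun x => is_deriveN (is_derive_ksqr x)) is_derive_F _ ya').
  by move=> x /andP[_ xa']; exact: dk_le.
have /andP[_ Fa'I] := FI a'; have /andP[Fy_ge0 _] := FI y.
have : C * (F a' - F y) <= C * I by rewrite ler_wpM2l //; lra.
by have := sqr_ge0 (k a'); lra.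
Qed.

End growth.

Theorem corollary3p4 (R : realType) (phi : R -> R) (a0 : R) :
  C4 phi ->
  sdf_profile phi ->
  globally_lipschitz phi ->
  (@lebesgue_measure R).-integrable setT (fun x : R => (derive1 phi x - a0)%:E) ->
  forall x1 : R, phi x1 = a0 * x1.
Proof.
move=> phiC4 phi_sdf phi_lip phi_int.
have [[x0 e_gt0]|e_eq0] := pselect (exists x0, 0 < angle_defect a0 (derive1 phi x0)).
  have P_lt := Pmon_lt phi phiC4 phi_sdf a0 x0 e_gt0; exfalso.
  have [P_pos|P_npos] := ltrP 0 (Pmon phi a0 (x0 + 1)).
    apply: (Pmon_not_eventually_pos phi a0 phiC4 phi_lip phi_int _ (x0 + 1) P_pos) => x.
    exact: Pmon_ndecr.
  have P_neg : 0 < - Pmon phi a0 (x0 - 1).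
    by rewrite oppr_gt0; exact: lt_le_trans P_lt P_npos.
  apply: (Pmon_not_eventually_neg phi a0 phiC4 phi_lip phi_int _ (x0 - 1) P_neg) => x.
  by rewrite opprK; exact: Pmon_ndecr.
apply: (sdf_profile_const_slope phi phi_sdf a0) => x; apply: angle_defect_eq0.
apply/eqP; rewrite eq_le angle_defect_ge0 andbT leNgt; apply/negP => e_gt0.
by apply: e_eq0; exists x.
Qed.
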